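(* A choice probability function $q_1:[0,\infty)\to[0,1]$ (depending only on the price $p_1$ of good 1) is QRUM-rationalizable if and only if: (A) $q_1$ is non-increasing; (B) $q_1$ is continuous; and (C) there exist prices $p_L$ and $p_H$ such that $\lim_{p_1\searrow p_L}q_1(p_1)=1$ and $\lim_{p_1\nearrow p_H}q_1(p_1)=0$.
   Context: Two goods: good 0 with price $0$ and good 1 with price $p_1\ge 0$; consumers have common income $y$ (large relative to prices) and spend the remainder on a numeraire. $q_1(p_1)$ is the population probability of choosing good 1. Definition (quasi-linear random utility model, QRUM): $q_1$ is QRUM-rationalizable if there exist a random variable $\eta$ with distribution $H$ and functions $V_0(\eta),V_1(\eta)$ and $\beta(\eta)>0$ (giving utilities $U_0(y,\eta)=V_0(\eta)+\beta(\eta)y$ and $U_1(y-p_1,\eta)=V_1(\eta)+\beta(\eta)(y-p_1)$) such that for all $p_1$, $q_1(p_1)=\int\mathbb{1}\{V_0(\eta)\le V_1(\eta)-\beta(\eta)p_1\}\,dH(\eta)$, and (i) for every $p_1$, $\int\mathbb{1}\{V_0(\eta)=V_1(\eta)-\beta(\eta)p_1\}\,dH(\eta)=0$; (ii) there exist a low price $p_L$ with $\lim_{p_1\searrow p_L}\Pr[V_0(\eta)\le V_1(\eta)-\beta(\eta)p_1]=1$ and a high price $p_H$ with $\lim_{p_1\nearrow p_H}\Pr[V_0(\eta)\le V_1(\eta)-\beta(\eta)p_1]=0$. *)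

From HB Require Import structures.
From mathcomp Require Import all_boot all_order all_algebra.
From mathcomp Require Import all_classical all_reals all_analysis.
Set Implicit Arguments. Unset Strict Implicit. Unset Printing Implicit Defensive.
Import Order.TTheory GRing.Theory Num.Theory.
Import numFieldNormedType.Exports.
Local Open Scope classical_set_scope.
Local Open Scope ring_scope.

(* A QRUM: a random variable eta (realised on a probability space T with law P,
   playing the role of H) and measurable V0, V1, beta with beta > 0. *)
Definition qrum_prob {R : realType} {d : measure_display} {T : measurableType d}
  (P : probability T R) (V0 V1 beta : T -> R) (p : R) : \bar R :=
  P [set eta | V0 eta <= V1 eta - beta eta * p].

Definition qrum_tie {R : realType} {d : measure_display} {T : measurableType d}
  (P : probability T R) (V0 V1 beta : T -> R) (p : R) : \bar R :=
  P [set eta | V0 eta = V1 eta - beta eta * p].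

Definition QRUM_rationalizable {R : realType} (q1 : R -> R) : Prop :=
  exists (d : measure_display) (T : measurableType d) (P : probability T R)
         (V0 V1 beta : T -> R),
    [/\ measurable_fun setT V0, measurable_fun setT V1, measurable_fun setT beta &
        (forall eta, 0 < beta eta)] /\
    [/\
        (forall p, 0 <= p -> (q1 p)%:E = qrum_prob P V0 V1 beta p),
        (forall p, 0 <= p -> qrum_tie P V0 V1 beta p = 0%E) &
        exists pL pH : R, [/\ 0 <= pL, 0 < pH,
          qrum_prob P V0 V1 beta p @[p --> pL^'+] --> 1%E &
          qrum_prob P V0 V1 beta p @[p --> pH^'-] --> 0%E]].

Definition nonincreasing_on_prices {R : realType} (q1 : R -> R) : Prop :=
  forall x y : R, 0 <= x -> x <= y -> q1 y <= q1 x.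

From HB Require Import structures.
From mathcomp Require Import all_boot all_order all_algebra.
From mathcomp Require Import all_classical all_reals all_analysis.
From mathcomp Require Import measurable_realfun.
Import Order.TTheory GRing.Theory Num.Theory.
Import numFieldNormedType.Exports.
Local Open Scope classical_set_scope.
Local Open Scope ring_scope.

(* A consumer of type eta buys good 1 at price p iff p <= W eta, where
   W = (V1 - V0) / beta is the willingness to pay; so q1 is the survival
   function p |-> P (W >= p).  By continuity of measures along monotone
   sequences of level sets, a survival function is nonincreasing,
   left-continuous everywhere and right-continuous wherever W has no atom,
   which is the no-tie condition.  Conversely, types drawn from the
   Lebesgue-Stieltjes probability with distribution function
   x |-> q1 (max (- x) 0) rationalize q1, and continuity of q1 rules out
   atoms, i.e. ties. *)

Lemma EFin_cvgP {R : realType} {I : Type} {F : set_system I} {FF : Filter F}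
    (f : I -> R) (l : R) :
  (f i)%:E @[i --> F] --> l%:E <-> f i @[i --> F] --> l.
Proof. by rewrite fine_cvgP; split=> [[]//|fl]; split=> //; exact: nearW. Qed.

Lemma near_eq_EFin_cvgP {R : realType} {I : Type} {F : set_system I}
    {FF : Filter F} {g : I -> \bar R} {f : I -> R} {l : R} :
    (\forall i \near F, g i = (f i)%:E) ->
  g i @[i --> F] --> l%:E <-> f i @[i --> F] --> l.
Proof.
move=> gf; rewrite -EFin_cvgP.
by split; apply: cvg_trans; apply: near_eq_cvg => //; apply: filterS gf => i ->.
Qed.

Section nonincreasing_one_sided_limits.
Context {R : realType} (g : R -> R) (p : R).
Hypothesis g_dec : nonincreasing_fun g.

Lemma nonincreasing_cvg_at_right :
  g (p + n.+1%:R^-1) @[n --> \oo] --> g p -> g x @[x --> p^'+] --> g p.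
Proof.
move=> /cvgrPdist_le gS; apply/cvgrPdist_le => e e_gt0.
have [N _ /(_ N (leqnn N)) gNe] := gS e e_gt0.
near=> x.
have px : p <= x by near: x; exact: nbhs_right_ge.
have xN : x <= p + N.+1%:R^-1.
  by near: x; apply: nbhs_right_le; rewrite ltrDl invr_gt0 ltr0n.
apply: le_trans gNe.
by rewrite !ger0_norm ?subr_ge0 ?g_dec ?lerD2l ?lerN2 ?g_dec ?(le_trans px).
Unshelve. all: by end_near. Qed.

Lemma nonincreasing_cvg_at_left :
  g (p - n.+1%:R^-1) @[n --> \oo] --> g p -> g x @[x --> p^'-] --> g p.
Proof.
move=> /cvgrPdist_le gS; apply/cvgrPdist_le => e e_gt0.
have [N _ /(_ N (leqnn N)) gNe] := gS e e_gt0.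
near=> x.
have xp : x <= p by near: x; exact: nbhs_left_le.
have Nx : p - N.+1%:R^-1 <= x.
  by near: x; apply: nbhs_left_ge; rewrite gtrBl invr_gt0 ltr0n.
apply: le_trans gNe.
by rewrite !ler0_norm ?subr_le0 ?g_dec ?opprB ?lerD2r ?g_dec ?(le_trans Nx).
Unshelve. all: by end_near. Qed.

End nonincreasing_one_sided_limits.

Lemma itvcyEbigcap_itvcy {R : realType} (x : R) :
  `[x, +oo[%classic = \bigcap_k `[x - k.+1%:R^-1, +oo[%classic.
Proof.
rewrite itvcyEbigcap; apply/seteqP; split=> y xy k _.
  by have := xy k I; rewrite /= !in_itv /= !andbT => /ltW.
have := xy k.+1 I; rewrite /= !in_itv /= !andbT; apply: lt_le_trans.
by rewrite ltrD2l ltrN2 ltf_pV2 ?posrE ?ltr0n // ltr_nat.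
Qed.

Lemma continuous_comp_within {T U V : topologicalType} (A : set U)
    (g : T -> U) (f : U -> V) :
  (forall x, A (g x)) -> continuous g -> {within A, continuous f} ->
  continuous (f \o g).
Proof.
move=> gA cg /subspace_continuousP cf x; apply: cvg_comp (cf _ (gA x)).
move=> Q /(cg x) gQ.
have {}gQ : \forall y \near x, A (g y) -> Q (g y) := gQ.
by apply: filterS gQ => y /(_ (gA y)).
Qed.

Section survival_function.
Context {d} {T : measurableType d} {R : realType} (P : probability T R).
Variable W : T -> R.
Hypothesis mW : forall p, measurable (W @^-1` `[p, +oo[).

Definition survival p := fine (P (W @^-1` `[p, +oo[)).

Let mWoy p : measurable (W @^-1` `]p, +oo[).
Proof. by rewrite itvoyEbigcup preimage_bigcup; exact: bigcup_measurable. Qed.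

Lemma survivalE p : P (W @^-1` `[p, +oo[) = (survival p)%:E.
Proof. by rewrite fineK // fin_num_measure. Qed.

Lemma survival_nonincreasing : nonincreasing_fun survival.
Proof.
move=> p q pq; rewrite -lee_fin -!survivalE le_measure ?inE //.
by move=> t /=; apply: subitvPl; rewrite bnd_simp.
Qed.

Lemma survival_cvg_at_left p : survival x @[x --> p^'-] --> survival p.
Proof.
apply: nonincreasing_cvg_at_left; first exact: survival_nonincreasing.
apply/EFin_cvgP; rewrite -survivalE; under eq_fun do rewrite -survivalE.
rewrite itvcyEbigcap_itvcy preimage_bigcap.
apply: nonincreasing_cvg_mu => //.
- by rewrite (le_lt_trans (probability_le1 _ _)) ?ltry.
- exact: bigcap_measurable.
- move=> m n mn; apply/subsetPset => t /=; apply: subitvPl.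
  by rewrite bnd_simp lerD2l lerN2 lef_pV2 ?posrE // ler_nat.
Qed.

Lemma survival_cvg_at_right p : P (W @^-1` [set p]) = 0%E ->
  survival x @[x --> p^'+] --> survival p.
Proof.
move=> Wp0; apply: nonincreasing_cvg_at_right.
  exact: survival_nonincreasing.
have Wcy_oy : W @^-1` `[p, +oo[ = W @^-1` [set p] `|` W @^-1` `]p, +oo[.
  by rewrite -preimage_setU setU1itv.
have mWp : measurable (W @^-1` [set p]).
  suff -> : W @^-1` [set p] = W @^-1` `[p, +oo[ `\` W @^-1` `]p, +oo[.
    exact: measurableD.
  apply/seteqP; split=> t /=; rewrite !in_itv /= !andbT.
    by move=> ->; rewrite lexx ltxx.
  by move=> [pW /negP]; rewrite -leNgt => Wp; apply/le_anti; rewrite Wp pW.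
have PWcy : P (W @^-1` `[p, +oo[) = P (W @^-1` `]p, +oo[).
  rewrite Wcy_oy measureU //; last first.
    by apply/seteqP; split=> t // [/= ->]; rewrite /= in_itv /= ltxx.
  by rewrite -[RHS]add0e; congr (_ + _).
apply/EFin_cvgP; rewrite -survivalE; under eq_fun do rewrite -survivalE.
rewrite PWcy itvoyEbigcup preimage_bigcup.
apply: nondecreasing_cvg_mu => //; first exact: bigcup_measurable.
move=> m n mn; apply/subsetPset => t /=; apply: subitvPl.
by rewrite bnd_simp lerD2l lef_pV2 ?posrE // ler_nat.
Qed.

Lemma survival_continuous p : P (W @^-1` [set p]) = 0%E ->
  {for p, continuous survival}.
Proof.
move=> Wp0; apply/left_right_continuousP; split.
  exact: survival_cvg_at_left.
exact: survival_cvg_at_right.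
Qed.

End survival_function.

Lemma lebesgue_stieltjes_measure_itvNyc {R : realType}
    (f : cumulativeBounded (0 : R) (1 : R)) (r : R) :
  lebesgue_stieltjes_measure f `]-oo, r] = (f r)%:E.
Proof.
have := cdf_lebesgue_stieltjes_id f r.
by rewrite /cdf /distribution /pushforward /= preimage_id.
Qed.

Lemma lebesgue_stieltjes_measure_set1 {R : realType} (f : cumulative R R)
    (r : R) :
  f x @[x --> r^'-] --> f r -> lebesgue_stieltjes_measure f [set r] = 0%E.
Proof.
move=> f_lc; set mu := lebesgue_stieltjes_measure f.
have mu_oc n :
    mu `]r - n.+1%:R^-1, r]%classic = (f r - f (r - n.+1%:R^-1))%:E.
  rewrite /mu /lebesgue_stieltjes_measure /measure_extension /=.
  rewrite measurable_mu_extE /=; last exact: is_ocitv.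
  by rewrite wlength_itv_bnd // gerBl invr_ge0.
suff mu_oc0 : mu `]r - n.+1%:R^-1, r]%classic @[n --> \oo] --> 0%E.
  have mu_ocr : mu `]r - n.+1%:R^-1, r]%classic @[n --> \oo] --> mu [set r].
    rewrite set1_bigcap_oc; apply: nonincreasing_cvg_mu => [|//||m n mn].
    - by have := ltry (f r - f (r - 0.+1%:R^-1)); rewrite -mu_oc.
    - exact: bigcap_measurable.
    - apply/subsetPset; apply: subset_itv; rewrite // bnd_simp.
      by rewrite lerB // lef_pV2 ?posrE // ler_nat.
  exact: (cvg_unique _ mu_ocr mu_oc0).
under eq_fun do rewrite mu_oc.
apply/EFin_cvgP; rewrite -(subrr (f r)); apply: cvgB; first exact: cvg_cst.
apply: ((cvg_at_leftP f r (f r)).1 f_lc (fun n => r - n.+1%:R^-1)).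
split=> [n|]; first by rewrite gtrBl invr_gt0.
rewrite -[X in _ --> X]subr0.
by apply: cvgB; [exact: cvg_cst | exact: cvg_harmonic].
Qed.

Section willingness_to_pay.
Context {d} {T : measurableType d} {R : realType} (V0 V1 beta : T -> R).
Hypothesis beta_gt0 : forall eta, 0 < beta eta.

Definition willingness_to_pay eta := (V1 eta - V0 eta) / beta eta.

Lemma buyersE p : [set eta | V0 eta <= V1 eta - beta eta * p] =
  willingness_to_pay @^-1` `[p, +oo[.
Proof.
apply/seteqP; split=> eta /=; rewrite in_itv /= andbT ler_pdivlMr //;
  by rewrite mulrC lerBrDl addrC -lerBrDl.
Qed.

Lemma tiesE p : [set eta | V0 eta = V1 eta - beta eta * p] =
  willingness_to_pay @^-1` [set p].
Proof.
rewrite /willingness_to_pay; apply/seteqP; split=> eta /= => [->|<-].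
  by rewrite opprB addrC subrK [_ * p]mulrC mulfK ?gt_eqF.
by rewrite mulrC divfK ?gt_eqF // opprB addrC subrK.
Qed.

Hypotheses (mV0 : measurable_fun setT V0) (mV1 : measurable_fun setT V1)
  (mbeta : measurable_fun setT beta).

Lemma measurable_buyers p :
  measurable [set eta | V0 eta <= V1 eta - beta eta * p].
Proof.
have mle := measurable_fun_ler mV0
  (measurable_funB mV1 (measurable_funM mbeta (measurable_cst p))).
by move/(_ measurableT [set true] I): mle; rewrite setTI.
Qed.

End willingness_to_pay.

Lemma QRUM_rationalizable_necessary {R : realType} (q1 : R -> R) :
  QRUM_rationalizable q1 ->
  [/\ nonincreasing_on_prices q1, {within `[0, +oo[, continuous q1} &
      exists pL pH : R, [/\ 0 <= pL, 0 < pH,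
        q1 p @[p --> pL^'+] --> (1 : R) & q1 p @[p --> pH^'-] --> (0 : R)]].
Proof.
move=> [d [T [P [V0 [V1 [beta [[mV0 mV1 mbeta beta_gt0]]]]]]]].
move=> [q1E no_tie [pL [pH [pL_ge0 pH_gt0 q1_pL q1_pH]]]].
set W := willingness_to_pay V0 V1 beta.
have mW p : measurable (W @^-1` `[p, +oo[).
  by rewrite -buyersE //; exact: measurable_buyers.
have q1S p : 0 <= p -> q1 p = survival P W p.
  move=> p_ge0; apply/EFin_inj.
  by rewrite q1E // -survivalE // /qrum_prob buyersE.
have qrumE a : 0 <= a ->
    \forall p \near a^'+, qrum_prob P V0 V1 beta p = (q1 p)%:E.
  move=> a_ge0; near=> p.
  have ap : a < p by near: p; exact: nbhs_right_gt.
  by rewrite q1E // ltW // (le_lt_trans a_ge0).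
split.
- move=> x y x_ge0 xy; rewrite !q1S ?(le_trans x_ge0) //.
  exact: survival_nonincreasing.
- apply: (@subspace_eq_continuous _ _ _ (survival P W)).
    by move=> p /set_mem /=; rewrite in_itv /= andbT => /q1S.
  apply: continuous_in_subspaceT => p /set_mem /=.
  rewrite in_itv /= andbT => p_ge0; apply: survival_continuous => //.
  by move: (no_tie p p_ge0); rewrite /qrum_tie tiesE.
- exists pL, pH; split => //.
    exact: (near_eq_EFin_cvgP (qrumE _ pL_ge0)).1 q1_pL.
  apply: (near_eq_EFin_cvgP _).1 q1_pH.
  near=> p.
  have p_gt0 : 0 < p by near: p; exact: nbhs_left_gt.
  by rewrite q1E // ltW.
Unshelve. all: by end_near. Qed.

Section QRUM_sufficient.
Context {R : realType} (q1 : R -> R).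
Hypothesis q1_01 : forall p : R, 0 <= p -> 0 <= q1 p <= 1.
Hypothesis q1_dec : nonincreasing_on_prices q1.
Hypothesis q1_cont : {within `[0, +oo[, continuous q1}.
Variables pL pH : R.
Hypotheses (pL_ge0 : 0 <= pL) (pH_gt0 : 0 < pH).
Hypothesis q1_pL : q1 p @[p --> pL^'+] --> (1 : R).
Hypothesis q1_pH : q1 p @[p --> pH^'-] --> (0 : R).

Let q1_0 : q1 0 = 1.
Proof.
apply/le_anti; rewrite (andP (q1_01 _ (lexx 0))).2 /=.
apply: (cvgr_to_le q1_pL); near=> p; apply: q1_dec => //.
suff : pL < p by move/(le_lt_trans pL_ge0)/ltW.
by near: p; exact: nbhs_right_gt.
Unshelve. all: by end_near. Qed.

Let q1_eq0 p : pH <= p -> q1 p = 0.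
Proof.
move=> pHp; have p_ge0 : 0 <= p by rewrite (le_trans (ltW pH_gt0)).
apply/le_anti; rewrite (andP (q1_01 _ p_ge0)).1 andbT.
apply: (cvgr_to_ge q1_pH); near=> x; apply: q1_dec.
  by apply: ltW; near: x; exact: nbhs_left_gt.
by rewrite (le_trans _ pHp) // ltW //; near: x; exact: nbhs_left_lt.
Unshelve. all: by end_near. Qed.

(* Types [eta] are distributed according to [F] and buy at price [p] iff
   [eta <= - p], so the demand at [p >= 0] is [F (- p) = q1 p]. *)
Let F x := q1 (Num.max (- x) 0).

Let F_nd : nondecreasing F.
Proof.
move=> x y xy; apply: q1_dec; first by rewrite le_max lexx orbT.
by rewrite ge_max !le_max lerN2 xy lexx !orbT.
Qed.

Let F_cont : continuous F.
Proof.
suff : continuous (q1 \o fun x => Num.max (- x) 0) by [].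
apply: continuous_comp_within q1_cont.
  by move=> x; rewrite /= in_itv /= le_max lexx orbT.
move=> x; apply: continuous_max; first exact: oppr_continuous.
exact: cst_continuous.
Qed.

#[local] HB.instance Definition _ :=
  isCumulative.Build R _ R F F_nd (right_continuousW F_cont).

Let F_Ny0 : F @ -oo --> (0 : R).
Proof.
have F0 : {near -oo, (fun=> 0 : R) =1 F}.
  near=> x; have pHx : pH <= - x.
    by rewrite lerNr; near: x; apply: nbhs_ninfty_le; exact: num_real.
  by rewrite /F max_l ?q1_eq0 // (le_trans _ pHx) // ltW.
exact: cvg_trans (near_eq_cvg F0) (cvg_cst _).
Unshelve. all: by end_near. Qed.

Let F_y1 : F @ +oo --> (1 : R).
Proof.
have F1 : {near +oo, (fun=> 1 : R) =1 F}.
  near=> x; have x_ge0 : 0 <= x.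
    by near: x; apply: nbhs_pinfty_ge; exact: num_real.
  by rewrite /F max_r ?q1_0 // oppr_le0.
exact: cvg_trans (near_eq_cvg F1) (cvg_cst _).
Unshelve. all: by end_near. Qed.

#[local] HB.instance Definition _ :=
  isCumulativeBounded.Build R 0 1 F F_Ny0 F_y1.

Lemma QRUM_rationalizable_sufficient : QRUM_rationalizable q1.
Proof.
pose P : probability (measurableTypeR R) R := lebesgue_stieltjes_measure F.
have qrumE p : 0 <= p ->
    qrum_prob P (fun x => x) (cst 0) (cst 1) p = (q1 p)%:E.
  move=> p_ge0; have -> : q1 p = F (- p) by rewrite /F opprK max_l.
  rewrite /qrum_prob (_ : [set x | _] = `]-oo, - p]%classic).
    exact: lebesgue_stieltjes_measure_itvNyc.
  by apply/seteqP; split => x; rewrite /= in_itv /= sub0r mul1r.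
exists _, (measurableTypeR R), P, (fun x => x), (cst 0), (cst 1); split.
  by split=> //; exact: measurable_id.
split.
- by move=> p p_ge0; rewrite qrumE.
- move=> p _; rewrite /qrum_tie (_ : [set x | _] = [set - p]).
    apply: lebesgue_stieltjes_measure_set1.
    by apply: cvg_at_left_filter; exact: F_cont.
  by apply/seteqP; split => x; rewrite /= sub0r mul1r.
- exists pL, pH; split => //.
    apply: (near_eq_EFin_cvgP _).2 q1_pL; near=> p; apply: qrumE.
    suff : pL < p by move/(le_lt_trans pL_ge0)/ltW.
    by near: p; exact: nbhs_right_gt.
  apply: (near_eq_EFin_cvgP _).2 q1_pH; near=> p; apply: qrumE.
  by apply: ltW; near: p; exact: nbhs_left_gt.
Unshelve. all: by end_near. Qed.

End QRUM_sufficient.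

Theorem corollary1 (R : realType) (q1 : R -> R)
  (hq1 : forall p : R, 0 <= p -> 0 <= q1 p <= 1) :
  QRUM_rationalizable q1 <->
  [/\ nonincreasing_on_prices q1,
      {within `[0, +oo[, continuous q1} &
      exists pL pH : R, [/\ 0 <= pL, 0 < pH,
        q1 p @[p --> pL^'+] --> (1 : R) &
        q1 p @[p --> pH^'-] --> (0 : R)]].
Proof.
split; first exact: QRUM_rationalizable_necessary.
move=> [q1_dec q1_cont [pL [pH [pL_ge0 pH_gt0 q1_pL q1_pH]]]].
exact: (QRUM_rationalizable_sufficient _ hq1 q1_dec q1_cont _ _ pL_ge0 pH_gt0
  q1_pL q1_pH).
Qed.
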